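(* Let $E$ be a nonempty directed graph with no source vertices, and $n$ a positive integer. Then $\mathcal S(E)$ is strongly $\mathbb Z/n\mathbb Z$-graded via $\phi:\mathcal S(E)\setminus\{0\}\to\mathbb Z/n\mathbb Z$, $\phi(xy^{-1})=(|x|-|y|)+n\mathbb Z$.
   Context: A directed graph $E=(E^0,E^1,\mathbf r,\mathbf s)$; a vertex $v$ is a source if $\mathbf r^{-1}(v)=\emptyset$; paths are finite sequences of edges $e_1\cdots e_n$ with $\mathbf r(e_i)=\mathbf s(e_{i+1})$ (vertices have length 0), $|x|$ is length. $\mathcal S(E)$ is the semigroup with zero generated by $E^0\cup E^1\cup\{e^{-1}:e\in E^1\}$ subject to $vw=\delta_{v,w}v$, $\mathbf s(e)e=e\mathbf r(e)=e$, $\mathbf r(e)e^{-1}=e^{-1}\mathbf s(e)=e^{-1}$, $e^{-1}f=\delta_{e,f}\mathbf r(e)$; nonzero elements are uniquely $xy^{-1}$ with paths $x,y$, $\mathbf r(x)=\mathbf r(y)$. A $\Gamma$-grading is a map $\phi:S\setminus\{0\}\to\Gamma$ with $\phi(st)=\phi(s)\phi(t)$ when $st\neq0$, $S_\alpha=\phi^{-1}(\alpha)\cup\{0\}$; it is strong if $S_\alpha S_\beta=S_{\alpha\beta}$ for all $\alpha,\beta$. *)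

From HB Require Import structures.
From mathcomp Require Import all_boot all_algebra.
Set Implicit Arguments. Unset Strict Implicit. Unset Printing Implicit Defensive.
Import GRing.Theory.

(** Generic notions: a semigroup with zero given by a carrier predicate [wf],
    a zero [z] and a multiplication [mul]; a grading [phi] into a group with
    operation [op]. *)
Section Grading.
Variables (S G : Type) (wf : S -> Prop) (z : S) (mul : S -> S -> S)
          (op : G -> G -> G) (phi : S -> G).

Definition is_grading : Prop :=
  forall s t, wf s -> wf t -> s <> z -> t <> z -> mul s t <> z ->
    phi (mul s t) = op (phi s) (phi t).

Definition component (a : G) (s : S) : Prop :=
  wf s /\ (s = z \/ (s <> z /\ phi s = a)).

(** strong: S_a S_b = S_{ab} (equality of sets of elements) *)
Definition is_strong_grading : Prop :=
  is_grading /\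
  forall a b s, component (op a b) s <->
    exists t u, component a t /\ component b u /\ s = mul t u.
End Grading.

Section GraphInverseSemigroup.
Variables (V E : eqType) (src rng : E -> V).

(** a path: starting vertex together with a list of edges e1 ... en;
    the vertex v alone (empty edge list) is the path of length 0 *)
Definition gpath := (V * seq E)%type.

Definition valid_path (p : gpath) : bool :=
  (if p.2 is e :: _ then src e == p.1 else true) &&
  sorted (fun e f => rng e == src f) p.2.

Definition prange (p : gpath) : V := last p.1 (map rng p.2).
Definition plen (p : gpath) : nat := size p.2.

(** elements of S(E): None is 0, Some (x, y) is x y^{-1} *)
Definition gis := option (gpath * gpath).

Definition gis_wf (s : gis) : Prop :=
  if s is Some (x, y) then
    [&& valid_path x, valid_path y & prange x == prange y]
  else True.

(** (x y^{-1})(z w^{-1}) = x p w^{-1} if z = y p;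
                        = x (w q)^{-1} if y = z q;  0 otherwise *)
Definition gis_mul (s t : gis) : gis :=
  match s, t with
  | Some (x, y), Some (z, w) =>
      if (y.1 == z.1) && prefix y.2 z.2 then
        Some ((x.1, x.2 ++ drop (size y.2) z.2), w)
      else if (z.1 == y.1) && prefix z.2 y.2 then
        Some (x, (w.1, w.2 ++ drop (size z.2) y.2))
      else None
  | _, _ => None
  end.

(** phi(x y^{-1}) = (|x| - |y|) + nZ, with n = k.+1 *)
Definition gis_phi (k : nat) (s : gis) : 'I_k.+1 :=
  if s is Some (x, y) then (inZp (plen x) - inZp (plen y))%R else 0%R.
End GraphInverseSemigroup.

(** The grading identity is a bookkeeping of lengths: a nonzero product of
    [x y^-1] and [z w^-1] has the form [x p w^-1] with [z = y p], or
    [x (w q)^-1] with [y = z q].  For strongness, a nonzero [x y^-1] of degree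
    [a + b] factors as [(x q^-1)(q y^-1)] for any path [q] ending at [r(x)];
    since no vertex is a source, such paths can be grown backwards from [r(x)]
    to any length, in particular to one congruent to [|x| - a] mod [n], which
    puts the two factors in degrees [a] and [b]. *)
From mathcomp Require Import all_boot all_algebra.
Set Implicit Arguments. Unset Strict Implicit. Unset Printing Implicit Defensive.
Import GRing.Theory.
Local Open Scope ring_scope.

Section StrongGrading.
Variables (S : eqType) (G : Type) (wf : S -> Prop) (z : S) (mul : S -> S -> S)
          (op : G -> G -> G) (phi : S -> G).

Hypotheses (wf0 : wf z) (mul0s : forall s, mul z s = z)
           (muls0 : forall s, mul s z = z)
           (wf_mul : forall s t, wf s -> wf t -> wf (mul s t)).

Lemma component0 a : component wf z phi a z.
Proof. by split; [|left]. Qed.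

Lemma strong_grading_of_factorization :
  is_grading wf z mul op phi ->
  (forall a b s, wf s -> s <> z -> phi s = op a b ->
     exists t u, component wf z phi a t /\ component wf z phi b u /\ s = mul t u) ->
  is_strong_grading wf z mul op phi.
Proof.
move=> grading factor; split=> // a b s; split.
  move=> [ws [->|[sn phis]]]; last exact: factor.
  exists z, z; rewrite mul0s.
  by split; [exact: component0 | split; first exact: component0].
move=> [t [u [[wt ht] [[wu hu] ->]]]]; split; first exact: wf_mul.
have [->|tun] := eqVneq (mul t u) z; [by left | right].
case: ht => [tz|[tn <-]]; first by rewrite tz mul0s eqxx in tun.
case: hu => [uz|[un <-]]; first by rewrite uz muls0 eqxx in tun.
by split; [apply/eqP | apply: grading => //; apply/eqP].
Qed.

End StrongGrading.

Section Paths.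
Variables (V E : eqType) (src rng : E -> V).

Definition pcat (p : gpath V E) (d : seq E) : gpath V E := (p.1, p.2 ++ d).

Lemma valid_cons v e l :
  valid_path src rng (v, e :: l) = (src e == v) && valid_path src rng (rng e, l).
Proof. by case: l => [|f l]; rewrite /valid_path //= (eq_sym (src f)). Qed.

Lemma valid_pcat p d :
  valid_path src rng (pcat p d) =
  valid_path src rng p && valid_path src rng (prange rng p, d).
Proof.
case: p => v l; rewrite /pcat /=; elim: l v => [|e l IH] v //=.
by rewrite !valid_cons IH andbA.
Qed.

Lemma prange_pcat p d : prange rng (pcat p d) = prange rng (prange rng p, d).
Proof. by rewrite /prange /= map_cat last_cat. Qed.

Lemma plen_pcat p d : plen (pcat p d) = (plen p + size d)%N.
Proof. exact: size_cat. Qed.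

Lemma path_to_of_length :
  (forall v, exists e, rng e = v) ->
  forall m v, exists p : gpath V E,
    [/\ valid_path src rng p, prange rng p = v & plen p = m].
Proof.
move=> no_source; elim=> [|m IH] v; first by exists (v, [::]).
have [[u l] [vp <- <-]] := IH v; have [e eu] := no_source u.
exists (src e, e :: l); split=> //.
- by rewrite valid_cons eqxx eu.
- by rewrite /prange /= eu.
Qed.

End Paths.

Section GraphInverseSemigroup.
Variables (V E : eqType) (src rng : E -> V).

Local Notation gis := (gis V E).
Local Notation gis_wf := (@gis_wf V E src rng).
Local Notation gis_mul := (@gis_mul V E).

Variant gis_mul_spec (x y z w : gpath V E) : gis -> Prop :=
  | GisMulExtendL d of z = pcat y d : gis_mul_spec x y z w (Some (pcat x d, w))
  | GisMulExtendR d of y = pcat z d : gis_mul_spec x y z w (Some (x, pcat w d))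
  | GisMul0 : gis_mul_spec x y z w None.

Lemma gis_mulP x y z w : gis_mul_spec x y z w (gis_mul (Some (x, y)) (Some (z, w))).
Proof.
rewrite /=; case: ifP => [/andP [/eqP ez /prefixP [d ed]] | _].
  rewrite ed drop_size_cat //; apply: (@GisMulExtendL x y z w d).
  by rewrite /pcat ez -ed -surjective_pairing.
case: ifP => [/andP [/eqP ey /prefixP [d ed]] | _]; last exact: GisMul0.
rewrite ed drop_size_cat //; apply: (@GisMulExtendR x y z w d).
by rewrite /pcat ey -ed -surjective_pairing.
Qed.

Lemma gis_muls0 s : gis_mul s None = None.
Proof. by case: s => [[]|]. Qed.

Lemma gis_wf_mul s t : gis_wf s -> gis_wf t -> gis_wf (gis_mul s t).
Proof.
case: s t => [[x y]|] [[z w]|] // /and3P [vx vy /eqP rxy] /and3P [vz vw /eqP rzw].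
case: gis_mulP => [d ez|d ey|] //=; subst.
- move: vz; rewrite valid_pcat => /andP [_ vd].
  by rewrite valid_pcat vx vw prange_pcat rxy -prange_pcat rzw vd eqxx.
- move: vy; rewrite valid_pcat => /andP [_ vd].
  by rewrite valid_pcat vx vw prange_pcat -rzw -prange_pcat rxy vd eqxx.
Qed.

Variable k : nat.
Local Notation gis_phi := (@gis_phi V E k).

Lemma inZpD (m n : nat) : inZp (m + n) = inZp m + inZp n :> 'I_k.+1.
Proof. by apply: val_inj; rewrite /= modnDm. Qed.

Lemma gis_phi_mul s t :
  gis_mul s t <> None -> gis_phi (gis_mul s t) = gis_phi s + gis_phi t.
Proof.
case: s t => [[x y]|] [[z w]|] //; case: gis_mulP => [d ->|d ->|] //= _;
  rewrite !plen_pcat !inZpD.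
- by rewrite !addrA subrK.
- by rewrite !opprD !addrA (addrAC (_ - inZp (plen z))) subrK addrAC.
Qed.

Lemma gis_factor :
  (forall v, exists e, rng e = v) ->
  forall (a b : 'I_k.+1) s, gis_wf s -> s <> None -> gis_phi s = a + b ->
  exists t u, component gis_wf None gis_phi a t /\
              component gis_wf None gis_phi b u /\ s = gis_mul t u.
Proof.
move=> no_source a b [[x y]|] //= /and3P [vx vy /eqP rxy] _ phis.
have [q [vq rq lq]] :=
  @path_to_of_length _ _ src rng no_source (inZp (plen x) - a)%R (prange rng x).
have inZp_q : inZp (plen q) = inZp (plen x) - a :> 'I_k.+1 by rewrite lq valZpK.
exists (Some (x, q)), (Some (q, y)); split; [|split].
- split; first by rewrite /= vx vq rq eqxx.
  by right; split=> //=; rewrite inZp_q subKr.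
- split; first by rewrite /= vy vq rq rxy eqxx.
  by right; split=> //=; rewrite inZp_q addrAC phis addrC addKr.
- by rewrite /= eqxx prefix_refl drop_size cats0 -surjective_pairing.
Qed.

End GraphInverseSemigroup.

Theorem lemma8p7 (V E : eqType) (src rng : E -> V) (k : nat) :
  (exists v : V, True) ->
  (forall v : V, exists e : E, rng e = v) ->
  is_strong_grading (@gis_wf V E src rng) None (@gis_mul V E)
    (fun a b : 'I_k.+1 => (a + b)%R) (@gis_phi V E k).
Proof.
move=> _ no_source; apply: strong_grading_of_factorization => //.
- exact: gis_muls0.
- exact: gis_wf_mul.
- by move=> s t _ _ _ _; apply: gis_phi_mul.
- exact: gis_factor.
Qed.
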